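(* Let $L\subset\mathbb{N}^2$ be a simple planar distributive lattice of rank $d+1$, equipped with the edge-labeling $\lambda$ and the maximal chain $\mathfrak{c}_0$ described in the context. Let $\mathfrak{c}:\min L=y_0<y_1<\dots<y_{d+1}=\max L$ be any maximal chain of $L$ with $\mathfrak{c}\neq\mathfrak{c}_0$. Then (i) $\lambda(\mathfrak{c})>_{\mathrm{lex}}\lambda(\mathfrak{c}_0)$; and (ii) there exists $q$ with $\lambda(y_{q-1}\to y_q)>\lambda(y_q\to y_{q+1})$.
   Context: $\mathbb{N}^2$ is ordered componentwise. A planar distributive lattice is a finite sublattice $L$ of $\mathbb{N}^2$ with $(0,0)\in L$ such that for any $(i,j)\le(k,\ell)$ in $L$ there is a chain in $L$ from $(i,j)$ to $(k,\ell)$ in which the coordinate sum increases by exactly $1$ at each step; thus every covering $x\to y$ in $L$ is a horizontal step $(i,j)\to(i+1,j)$ or a vertical step $(i,j)\to(i,j+1)$. $L$ is simple if it has no cut edge, i.e. no pair $(a,b)$, $\operatorname{rank} b=\operatorname{rank} a+1$, with $a$ the unique element of its rank and $b$ the unique element of its rank. Let $\mathfrak{c}_0: x_0<x_1<\dots<x_{d+1}$, $x_t=(i_t,j_t)$, be the maximal chain with $x_0=(0,0)$, $x_{d+1}=\max L$ such that for every $(k,\ell)\in L$ with $k=i_t$ for some $t$ we have $\ell\le j_t$ (the ''uppermost'' maximal chain). The labeling $\lambda$: the edge $x_t\to x_{t+1}$ of $\mathfrak{c}_0$ gets label $t+1$ ($0\le t\le d$); if $i_{t+1}=i_t+1$,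 every edge of $L$ of the form $(i_t,j)\to(i_{t+1},j)$ gets label $t+1$; if $j_{t+1}=j_t+1$, every edge of $L$ of the form $(i,j_t)\to(i,j_{t+1})$ gets label $t+1$. A chain $z_0\to z_1\to\dots\to z_k$ is labeled by the tuple $(\lambda(z_0\to z_1),\dots,\lambda(z_{k-1}\to z_k))$, and tuples are compared lexicographically ($>_{\mathrm{lex}}$: the leftmost nonzero entry of the difference is positive). *)

From mathcomp Require Import all_boot.
Set Implicit Arguments. Unset Strict Implicit. Unset Printing Implicit Defensive.

Definition lep (p q : nat * nat) : bool := (p.1 <= q.1) && (p.2 <= q.2).
Definition meetp (p q : nat * nat) : nat * nat := (minn p.1 q.1, minn p.2 q.2).
Definition joinp (p q : nat * nat) : nat * nat := (maxn p.1 q.1, maxn p.2 q.2).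

Definition step (x y : nat * nat) : bool :=
  (y == (x.1.+1, x.2)) || (y == (x.1, x.2.+1)).

(* rank of (i,j) = coordinate sum (distance from (0,0) along unit-step chains) *)
Definition rk (p : nat * nat) : nat := p.1 + p.2.

Definition planar_distr_lattice (L : seq (nat * nat)) : Prop :=
  [/\ (0, 0) \in L,
      (forall p q, p \in L -> q \in L -> meetp p q \in L /\ joinp p q \in L) &
      (forall p q, p \in L -> q \in L -> lep p q ->
         exists s : seq (nat * nat),
           [/\ path step p s, last p s = q & all (fun z => z \in L) s])].

Definition unique_of_rank (L : seq (nat * nat)) (a : nat * nat) : Prop :=
  a \in L /\ forall z, z \in L -> rk z = rk a -> z = a.

(* simple: no cut edge *)
Definition simple_pdl (L : seq (nat * nat)) : Prop :=
  ~ exists a b, [/\ rk b = (rk a).+1, unique_of_rank L a & unique_of_rank L b].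

Definition is_max (L : seq (nat * nat)) (t : nat * nat) : Prop :=
  t \in L /\ forall z, z \in L -> lep z t.

(* A maximal chain of L is represented by c, the chain being (0,0) :: c,
   i.e. y_0 = (0,0), y_1, ..., y_{d+1} = max L, consecutive elements
   covering each other (unit steps). *)
Definition max_chain (L : seq (nat * nat)) (c : seq (nat * nat)) : Prop :=
  [/\ path step (0, 0) c, all (fun z => z \in L) c & is_max L (last (0, 0) c)].

Definition uppermost (L : seq (nat * nat)) (c0 : seq (nat * nat)) : Prop :=
  forall p, p \in L -> exists x, [/\ x \in (0, 0) :: c0, x.1 = p.1 & p.2 <= x.2].

(* The labeling lambda determined by c0: the edges of c0 are
   zip ((0,0)::c0) c0, the t-th (0-based) having label t+1. A horizontal edge
   (i,j)->(i+1,j) gets the label of the horizontal c0-edge from column i to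
   column i+1; a vertical edge (i,j)->(i,j+1) gets the label of the vertical
   c0-edge from row j to row j+1. *)
Definition lam (c0 : seq (nat * nat)) (x y : nat * nat) : nat :=
  let E := zip ((0, 0) :: c0) c0 in
  if y == (x.1.+1, x.2) then
    (find (fun e => (e.1.1 == x.1) && (e.2.1 == x.1.+1)) E).+1
  else
    (find (fun e => (e.1.2 == x.2) && (e.2.2 == x.2.+1)) E).+1.

Definition chain_labels (c0 c : seq (nat * nat)) : seq nat :=
  [seq lam c0 e.1 e.2 | e <- zip ((0, 0) :: c) c].

Definition lexgt (s t : seq nat) : Prop :=
  exists k, take k s = take k t /\ nth 0 t k < nth 0 s k.

From mathcomp Require Import all_boot zify.
Set Implicit Arguments. Unset Strict Implicit. Unset Printing Implicit Defensive.

(* Let c leave c0 for the first time at the common vertex x = (i, j), after k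
   shared steps. Since c0 is uppermost, c0 must step up to (i, j+1) there (if
   c stepped up while c0 stepped right, no vertex of c0 in column i would reach
   height j+1), so c steps right to (i+1, j). The label of c0 is then k+1, the label
   of c is that of c0's step from column i to i+1, which comes later: this gives
   (i). Afterwards c still has to climb from row j to row j+1, and that vertical
   step carries c0's label k+1, smaller than the label c used at position k;
   somewhere in between the labels of c must descend: this gives (ii). *)

Lemma lep_refl : reflexive lep. Proof. by move=> p; rewrite /lep !leqnn. Qed.

Lemma lep_trans : transitive lep.
Proof.
move=> q p r /andP[pq1 pq2] /andP[qr1 qr2]; apply/andP.
by split; [exact: leq_trans qr1 | exact: leq_trans qr2].
Qed.

Lemma lep_anti p q : lep p q -> lep q p -> p = q.
Proof.
case: p q => [a b] [a' b'] /andP[/= ha hb] /andP[/= ha' hb'].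
by congr pair; apply/eqP; rewrite eqn_leq ?ha ?hb.
Qed.

Lemma step_lep : subrel step lep.
Proof. by move=> p q /orP[] /eqP->; rewrite /lep /= ?leqnn ?leqnSn. Qed.

Lemma step_row_succ p q : step p q -> q.2 = p.2.+1 -> q = (p.1, p.2.+1).
Proof. by case/orP=> /eqP-> //= /n_Sn. Qed.

Lemma path_step_nth_lep x s i j : path step x s -> i <= j -> j <= size s ->
  lep (nth x (x :: s) i) (nth x (x :: s) j).
Proof.
move=> xs ij js; have sorted_xs : sorted lep (x :: s) by exact: sub_path step_lep _ _ xs.
by apply: (sorted_leq_nth lep_trans lep_refl) => //; rewrite inE /=; lia.
Qed.

Lemma rk_last_path x s : path step x s -> rk (last x s) = rk x + size s.
Proof.
elim: s x => [|y s IH] x /=; first by rewrite addn0.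
by case/andP=> /orP[] /eqP-> /IH->; rewrite /rk /=; lia.
Qed.

Lemma path_step_cross_row x s r : path step x s -> x.2 <= r -> r < (last x s).2 ->
  exists2 i, i < size s & (nth x (x :: s) i).2 = r /\ (nth x s i).2 = r.+1.
Proof.
elim: s x => [|y s IH] x /=; first by move=> _ h1 h2; lia.
case/andP=> xy ys xr rl; have [yr|] := leqP y.2 r.
- have [i lti [src tgt]] := IH y ys yr rl.
  by exists i.+1 => //=; rewrite !(set_nth_default y) // ltnW.
- move=> r_lt; exists 0 => //=.
  by case/orP: xy r_lt => /eqP-> /= r_lt; lia.
Qed.

Lemma max_chain_last L c c' :
  max_chain L c -> max_chain L c' -> last (0, 0) c = last (0, 0) c'.
Proof. by move=> [_ _ [cL cmax]] [_ _ [cL' cmax']]; apply: lep_anti; [apply: cmax' | apply: cmax]. Qed.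

Lemma max_chain_size L c c' : max_chain L c -> max_chain L c' -> size c = size c'.
Proof.
move=> mc mc'; have [pc _ _] := mc; have [pc' _ _] := mc'.
by have := rk_last_path pc; rewrite (max_chain_last mc mc') (rk_last_path pc') => /addnI.
Qed.

Lemma first_mismatch (T : eqType) (x0 : T) (s t : seq T) :
  size s = size t -> s <> t ->
  exists k, [/\ k < size s, take k s = take k t & nth x0 s k <> nth x0 t k].
Proof.
elim: s t => [|a s IH] [|b t] //= [size_st] neq.
have [eq_ab|neq_ab] := eqVneq a b; last by exists 0; split=> //; apply/eqP.
subst b.
have [|k [ltk eq_take neq_k]] := IH t size_st; first by move=> eq_st; apply: neq; rewrite eq_st.
by exists k.+1; rewrite /= eq_take.
Qed.

Lemma nth_take_eq (T : Type) (x0 : T) n (s t : seq T) i :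
  take n s = take n t -> i < n -> nth x0 s i = nth x0 t i.
Proof. by move=> eq_take lt_in; rewrite -(nth_take x0 lt_in) eq_take nth_take. Qed.

Lemma take_zip (S T : Type) n (s : seq S) (t : seq T) :
  take n (zip s t) = zip (take n s) (take n t).
Proof. by elim: s t n => [|x s IH] [|y t] [|n] //=; rewrite IH. Qed.

Lemma nth_zip_cons (T : Type) (x : T) s i : i < size s ->
  nth (x, x) (zip (x :: s) s) i = (nth x (x :: s) i, nth x s i).
Proof. by move=> lt_is; rewrite nth_zip_cond size_zip /= ifT //; lia. Qed.

Lemma find_ge (T : Type) (a : pred T) x0 s n : n <= size s ->
  (forall i, i < n -> ~~ a (nth x0 s i)) -> n <= find a s.
Proof.
move=> le_ns before_n; rewrite leqNgt; apply/negP => lt_find.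
have has_a : has a s by rewrite has_find; exact: leq_trans lt_find le_ns.
by have := before_n _ lt_find; rewrite nth_find.
Qed.

Lemma find_first (T : Type) (a : pred T) x0 s k : k < size s -> a (nth x0 s k) ->
  (forall i, i < k -> ~~ a (nth x0 s i)) -> find a s = k.
Proof.
move=> lt_ks ak before_k; apply/eqP; rewrite eqn_leq (find_ge (x0 := x0)) ?andbT //; last exact: ltnW.
by rewrite leqNgt; apply: contraL ak => lt_k; rewrite (before_find x0 lt_k).
Qed.

Lemma nat_descent (l : seq nat) k i : k < i -> i < size l -> nth 0 l i < nth 0 l k ->
  exists q, q.+1 < size l /\ nth 0 l q.+1 < nth 0 l q.
Proof.
move=> lt_ki lt_il lt_lab.
have [/hasP[q]|/hasPn no_descent] :=
  boolP (has (fun q => nth 0 l q.+1 < nth 0 l q) (iota 0 (size l).-1)).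
- by rewrite mem_iota => /andP[_ lt_q] ?; exists q; split=> //; lia.
have sorted_l : sorted leq l.
  by apply/(sortedP 0) => j lt_j; rewrite leqNgt no_descent // mem_iota; lia.
have := sorted_leq_nth leq_trans leqnn 0 sorted_l _ _ (ltn_trans lt_ki lt_il) lt_il (ltnW lt_ki).
by rewrite leqNgt lt_lab.
Qed.

Lemma size_chain_labels c0 c : size (chain_labels c0 c) = size c.
Proof. by rewrite size_map size_zip /=; lia. Qed.

Lemma nth_chain_labels c0 c i : i < size c ->
  nth 0 (chain_labels c0 c) i = lam c0 (nth (0, 0) ((0, 0) :: c) i) (nth (0, 0) c i).
Proof.
move=> lt_ic; rewrite (nth_map ((0, 0), (0, 0))); first by rewrite nth_zip_cons.
by rewrite size_zip /=; lia.
Qed.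

Lemma chain_labels_take c0 c c' k :
  take k c = take k c' -> take k (chain_labels c0 c) = take k (chain_labels c0 c').
Proof.
move=> eq_take; rewrite /chain_labels -!map_take !take_zip eq_take; case: k eq_take => //= k eq_take.
by rewrite -(take_takel _ (leqnSn k)) eq_take take_takel.
Qed.

Section UppermostChain.

Variable c0 : seq (nat * nat).
Hypothesis pc0 : path step (0, 0) c0.

Let v i := nth (0, 0) ((0, 0) :: c0) i.

Lemma lam_vertical k p q : k < size c0 -> (v k.+1).2 = (v k).2.+1 ->
  p.2 = (v k).2 -> q = (p.1, p.2.+1) -> lam c0 p q = k.+1.
Proof.
move=> lt_k up_k p_row ->; rewrite /lam /= ifN; last by apply/eqP => -[]; lia.
congr S; apply: (find_first (x0 := ((0, 0), (0, 0)))); rewrite ?size_zip /=; try lia.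
  by rewrite nth_zip_cons //= p_row up_k !eqxx.
move=> i lt_ik; rewrite nth_zip_cons /=; last lia.
have /andP[_ /= row_le] := path_step_nth_lep pc0 lt_ik (ltnW lt_k).
by rewrite p_row /v; apply/nandP; right; apply/eqP; lia.
Qed.

Lemma lam_horizontal_gt n p q : n <= size c0 -> (v n).1 <= p.1 ->
  q = (p.1.+1, p.2) -> n < lam c0 p q.
Proof.
move=> le_n col_le ->; rewrite /lam /= eqxx ltnS.
apply: (find_ge (x0 := ((0, 0), (0, 0)))); first by rewrite size_zip /=; lia.
move=> i lt_in; rewrite nth_zip_cons /=; last lia.
have /andP[/= col_i _] := path_step_nth_lep pc0 lt_in le_n.
rewrite /v in col_le; by apply/nandP; right; apply/eqP; lia.
Qed.

Lemma uppermost_step_up L k : uppermost L c0 -> k < size c0 ->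
  ((v k).1, (v k).2.+1) \in L -> nth (0, 0) c0 k = ((v k).1, (v k).2.+1).
Proof.
move=> upp lt_k /upp[z [z_c0 /= z_col z_row]].
have [j le_j def_z] : exists2 j, j <= size c0 & z = v j.
  exists (index z ((0, 0) :: c0)); last by rewrite /v nth_index.
  by rewrite -ltnS -[(size c0).+1]/(size ((0, 0) :: c0)) index_mem.
rewrite {}def_z /v in z_col z_row *.
have [le_jk|lt_kj] := leqP j k.
  by have /andP[_ /= row_le] := path_step_nth_lep pc0 le_jk (ltnW lt_k); lia.
have /andP[/= col_le _] := path_step_nth_lep pc0 lt_kj le_j.
by case/orP: (pathP (0, 0) pc0 k lt_k) => /eqP ck; rewrite /= ck /= in col_le *; [exfalso; lia |].
Qed.

Lemma uppermost_branch L c k : uppermost L c0 -> path step (0, 0) c -> all (mem L) c ->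
  k < size c0 -> k < size c -> v k = nth (0, 0) ((0, 0) :: c) k ->
  nth (0, 0) c k <> nth (0, 0) c0 k ->
  nth (0, 0) c k = ((v k).1.+1, (v k).2) /\ nth (0, 0) c0 k = ((v k).1, (v k).2.+1).
Proof.
move=> upp pc cL lt_k0 lt_k common_k neq_k.
have step_c : step (v k) (nth (0, 0) c k) by rewrite common_k; exact: (pathP (0, 0) pc).
case/orP: step_c => /eqP c_k.
  by split=> //; case/orP: (pathP (0, 0) pc0 k lt_k0) => /eqP c0_k //; rewrite c_k c0_k in neq_k.
exfalso; apply: neq_k; rewrite c_k (uppermost_step_up upp lt_k0) //.
by rewrite -c_k; apply: (allP cL); exact: mem_nth.
Qed.

Lemma chain_labels_cross_row c k : path step (0, 0) c -> k < size c0 ->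
  (v k.+1).2 = (v k).2.+1 -> (v k).2 < (last (0, 0) c).2 ->
  exists2 i, i < size c &
    nth 0 (chain_labels c0 c) i = k.+1 /\ (nth (0, 0) c i).2 = (v k).2.+1.
Proof.
move=> pc lt_k0 up_k row_last.
have [i lt_i [src tgt]] := path_step_cross_row pc (leq0n _) row_last.
exists i => //; split=> //; rewrite nth_chain_labels // (lam_vertical lt_k0) //.
by apply: step_row_succ; [exact: (pathP (0, 0) pc) | rewrite tgt src].
Qed.

End UppermostChain.

Theorem lemma5 (L : seq (nat * nat)) (d : nat) (c0 c : seq (nat * nat)) :
  planar_distr_lattice L ->
  simple_pdl L ->
  (exists t, is_max L t /\ rk t = d.+1) ->
  max_chain L c0 -> uppermost L c0 ->
  max_chain L c -> c <> c0 ->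
  lexgt (chain_labels c0 c) (chain_labels c0 c0) /\
  (exists q, q.+1 < size (chain_labels c0 c) /\
     nth 0 (chain_labels c0 c) q.+1 < nth 0 (chain_labels c0 c) q).
Proof.
move=> _ _ _ mc0 upp mc neq; have [pc0 _ _] := mc0; have [pc cL _] := mc.
have size_eq := max_chain_size mc mc0.
have [k [lt_k eq_take neq_k]] := first_mismatch (0, 0) size_eq neq.
have lt_k0 : k < size c0 by rewrite -size_eq.
have common i : i <= k -> nth (0, 0) ((0, 0) :: c) i = nth (0, 0) ((0, 0) :: c0) i.
  by move=> le_ik; apply: (@nth_take_eq _ _ k.+1); rewrite //= eq_take.
set x := nth (0, 0) ((0, 0) :: c0) k.
have [c_right c0_up] := uppermost_branch pc0 upp pc cL lt_k0 lt_k (esym (common k (leqnn k))) neq_k.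
have lab_c0 : nth 0 (chain_labels c0 c0) k = k.+1.
  by rewrite nth_chain_labels // (lam_vertical pc0 lt_k0) //= c0_up.
have lab_c : k.+1 < nth 0 (chain_labels c0 c) k.
  by rewrite nth_chain_labels // common // (lam_horizontal_gt pc0 lt_k0) //= c0_up.
split; first by exists k; split; [exact: chain_labels_take | rewrite lab_c0].
have row_last : x.2 < (last (0, 0) c).2.
  rewrite (max_chain_last mc mc0) (last_nth (0, 0)).
  by have /andP[_] := path_step_nth_lep pc0 lt_k0 (leqnn _); rewrite /= c0_up.
have up_k : (nth (0, 0) c0 k).2 = x.2.+1 by rewrite c0_up.
have [i lt_i [lab_i tgt]] := chain_labels_cross_row pc0 pc lt_k0 up_k row_last.
have lt_ki : k < i.
  rewrite ltnNge; apply/negP => le_ik.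
  have /andP[_] := path_step_nth_lep (i := i.+1) (j := k.+1) pc le_ik lt_k.
  by rewrite /= c_right /= tgt ltnn.
by apply: (nat_descent lt_ki); rewrite ?size_chain_labels // lab_i.
Qed.
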